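(* Let $\Gamma=(\rho_0,\dots,\rho_{n-1})$ be a context with every $\rho_k\in\mathrm{Type}^+\cup\mathrm{Type}^-$, let $\Gamma\vdash r:\rho$ be a typed term, $C=(i_0,\dots,i_{n-1})$ with $i_k\in I_{\rho_k}$, and $i\le i'$ in $I_\rho$ such that both state judgements $C\vdash r:i$ and $C\vdash r:i'$ are derivable. Then $\llbracket r\rrbracket^{i'}_{\vec a:C}\triangleright\llbracket r\rrbracket^{i}_{\vec a:C}$ for every $\vec a\in\llbracket\Gamma\rrbracket_C$.
   Context: Systems and factor systems: for a non-empty directed preordered set $I$, a system consists of pairwise disjoint sets $M_i$ ($i\in I$) and relations $\triangleright\subseteq M_{i'}\times M_i$ ($i\le i'$), reflexive for $i=i'$; $a_i\approx b_j$ iff some $c\in M_{i'}$, $i'\ge i,j$, has $c\triangleright a_i,c\triangleright b_j$; prefactor system: $a_{i'}\approx a_i\iff a_{i'}\triangleright a_i$. A factor system is a prefactor system with $\approx$-preserving $emb_{i,i'}:M_i\to M_{i'}$, $proj_{i',i}:M_{i'}\to M_i$ with $emb_{i,i}(a)\approx a$, $proj_{i,i}(a)\approx a$, $emb_{i',i''}\circ emb_{i,i'}(a)\approx emb_{i,i''}(a)$, $proj_{i',i}\circ proj_{i'',i'}(a)\approx proj_{i'',i}(a)$, $proj_{i',i}(emb_{i,i'}(a))\approx a$, and $a_{i'}\triangleright a_i\Rightarrow emb_{i',i''}(a_{i'})\triangleright a_i$, $a_{i''}\triangleright a_i\Rightarrow proj_{i'',i'}(a_{i''})\triangleright a_i$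 ($i\le i'\le i''$); it is direct iff $a_{i'}\triangleright a_i\iff a_{i'}\approx emb_{i,i'}(a_i)$. Filters: for each such $I$ a family $\mathcal F(I)$ of cofinal subsets, closed under supersets and finite intersections, containing all non-empty up-sets; standing Condition (D): $H\in\mathcal F(I\times J)$, $I'\in\mathcal F(I)$ imply $\{j\mid\exists i\in I',(i,j)\in H\}\in\mathcal F(J)$. A target for $M_I$: a set $M$ with relation $a\triangleright a_i$ with $\{i\mid\exists a_i,a\triangleright a_i\}\in\mathcal F(I)$ and $a\triangleright a_{i'},a\triangleright a_i\Rightarrow a_{i'}\triangleright a_i$; a limit is a target $M$ such that every target $N$ admits a unique $\Phi:N\to M$ with $b\triangleright a_i\Rightarrow\Phi(b)\triangleright a_i$. Function space $[M_I\to N_J]$: indices $i\to j\in I\times J$, states = $\approx$-preserving functions $M_i\to N_j$, $f'\triangleright f$ iff $a_{i'}\triangleright a_i\Rightarrow f'(a_{i'})\triangleright f(a_i)$, embeddings $f\mapsto emb_{j,j'}\circ f\circ proj_{i',i}$, projections $f'\mapsto proj_{j',j}\circ f'\circ emb_{i,i'}$. For targets: $[M\to_{\mathcal F}N]=\{f:M\to N\mid I_f\in\mathcal F(I\times J)\}$, $f\triangleright f_{i\to j}$ iff $a\triangleright a_i\Rightarrow f(a)\triangleright f_{i\to j}(a_i)$, $I_f=\{i\to j\mid\exists f_{i\to j},f\triangleright f_{i\to j}\}$. Types $\rho::=\iota\mid\rho\to\rho$ over base types including $\mathsf{prop}$; $\mathrm{Type}^+\ni\rho^+::=\iota\mid\rho^-\to\rho^+$,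 $\mathrm{Type}^-\ni\rho^-::=\mathsf{prop}\mid\rho^+\to\rho^-$. Index sets: non-empty directed $I_\rho$, $I_{\mathsf{prop}}=\{\mathsf{prop}\}$, $I_{\rho\to\sigma}=I_\rho\times I_\sigma$ (elements written $i\to j$). Interpretation of types: each $\rho$ gets a factor system $(\llbracket\rho\rrbracket_i)_{i\in I_\rho}$ and a limit $\llbracket\rho\rrbracket$; base types get direct factor systems; $\mathsf{prop}$ gets the one-index system with state $\{true,false\}$ and limit $\{true,false\}$, all relations being equality; $\rho\to\sigma$ gets the function space $[(\llbracket\rho\rrbracket_i)\to(\llbracket\sigma\rrbracket_j)]$ with limit $[\llbracket\rho\rrbracket\to_{\mathcal F}\llbracket\sigma\rrbracket]$. For $\Gamma=(\rho_0,\dots,\rho_{n-1})$ and $C=(i_0,\dots,i_{n-1})$: $\llbracket\Gamma\rrbracket_C=\prod_k\llbracket\rho_k\rrbracket_{i_k}$. Terms (variables $x_0,x_1,\dots$): $r::=x_k\mid rr\mid\lambda x_k^\rho r$. Typing: $\Gamma\vdash x_k:\rho_k$ ($k<n$); from $\Gamma\vdash r:\rho\to\sigma$, $\Gamma\vdash s:\rho$ infer $\Gamma\vdash rs:\sigma$; from $\Gamma.\rho\vdash r:\sigma$ (context extended by $\rho$ as $x_n$) infer $\Gamma\vdash\lambda x_n^\rho r:\rho\to\sigma$. State judgements: $C\vdash x_k:j$ if $\rho_k\in\mathrm{Type}^+$ and $j\ge i_k$, or if $\rho_k\in\mathrm{Type}^-$ and $j\le i_k$; from $C\vdash r:i\to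 j$ and $C\vdash s:i$ infer $C\vdash rs:j$; from $C.i\vdash r:j$ infer $C\vdash\lambda x_n^\rho r:i\to j$. State values, defined along the derivation of $C\vdash r:i$ for $\vec a\in\llbracket\Gamma\rrbracket_C$: $\llbracket x_k\rrbracket^j_{\vec a:C}=emb_{i_k,j}(a_k)$ if $\rho_k\in\mathrm{Type}^+$, $=proj_{i_k,j}(a_k)$ if $\rho_k\in\mathrm{Type}^-$; $\llbracket rs\rrbracket^j_{\vec a:C}=\llbracket r\rrbracket^{i\to j}_{\vec a:C}(\llbracket s\rrbracket^i_{\vec a:C})$; $\llbracket\lambda x_n^\rho r\rrbracket^{i\to j}_{\vec a:C}(b)=\llbracket r\rrbracket^j_{\vec a.b:C.i}$ for $b\in\llbracket\rho\rrbracket_i$. *)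

From Stdlib Require Import List.
Import ListNotations.

Set Implicit Arguments.
Unset Strict Implicit.

(* Raw data of a system: index preorder, states, relation |>, emb, proj.
   [svalid i a] singles out the actual states inside the carrier [sst i]
   (for base types and prop every element is a state; for function spaces
   the states are the ~-preserving functions, see [funSys]).
   [srel i i' a' a] means  a'_{i'} |> a_i  (a' in M_{i'}, a in M_i).
   [semb H] = emb_{i,i'} and [sproj H] = proj_{i',i} for H : i <= i'.      *)
Record RawSys := {
  sidx   : Type;
  sle    : sidx -> sidx -> Prop;
  sst    : sidx -> Type;
  svalid : forall i, sst i -> Prop;
  srel   : forall i i', sst i' -> sst i -> Prop;
  semb   : forall i i', sle i i' -> sst i -> sst i';
  sproj  : forall i i', sle i i' -> sst i' -> sst i
}.

Arguments sle {S} i j : rename.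
Arguments sst {S} i : rename.
Arguments svalid {S} {i} a : rename.
Arguments srel {S} {i i'} a' a : rename.
Arguments semb {S} {i i'} H a : rename.
Arguments sproj {S} {i i'} H a : rename.

Definition approx (S : RawSys) (i j : sidx S) (a : sst i) (b : sst j) : Prop :=
  exists (k : sidx S) (c : sst k),
    svalid c /\ sle i k /\ sle j k /\ srel c a /\ srel c b.

Record BaseSys := {
  bidx  : Type;
  ble   : bidx -> bidx -> Prop;
  bst   : bidx -> Type;
  brel  : forall i i', bst i' -> bst i -> Prop;
  bemb  : forall i i', ble i i' -> bst i -> bst i';
  bproj : forall i i', ble i i' -> bst i' -> bst i
}.

Definition baseRaw (B : BaseSys) : RawSys :=
  {| sidx := bidx B; sle := @ble B; sst := @bst B;
     svalid := fun _ _ => True; srel := @brel B;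
     semb := @bemb B; sproj := @bproj B |}.

Definition directed_preorder (S : RawSys) : Prop :=
  inhabited (sidx S) /\
  (forall i : sidx S, sle i i) /\
  (forall i j k : sidx S, sle i j -> sle j k -> sle i k) /\
  (forall i j : sidx S, exists k, sle i k /\ sle j k).

Definition is_system (S : RawSys) : Prop :=
  directed_preorder S /\
  (forall (i i' : sidx S) (a' : sst i') (a : sst i), srel a' a -> sle i i') /\
  (forall (i : sidx S) (a : sst i), svalid a -> srel a a).

Definition is_prefactor_system (S : RawSys) : Prop :=
  is_system S /\
  forall (i i' : sidx S) (a' : sst i') (a : sst i), svalid a' -> svalid a -> sle i i' ->
    (approx a' a <-> srel a' a).

Definition is_factor_system (S : RawSys) : Prop :=
  is_prefactor_system S /\
  (forall (i i' : sidx S) (H : sle i i') (a : sst i), svalid a -> svalid (semb H a)) /\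
  (forall (i i' : sidx S) (H : sle i i') (a : sst i'), svalid a -> svalid (sproj H a)) /\
  (forall (i i' : sidx S) (H : sle i i') (a b : sst i), svalid a -> svalid b ->
      approx a b -> approx (semb H a) (semb H b)) /\
  (forall (i i' : sidx S) (H : sle i i') (a b : sst i'), svalid a -> svalid b ->
      approx a b -> approx (sproj H a) (sproj H b)) /\
  (forall (i : sidx S) (H : sle i i) (a : sst i), svalid a -> approx (semb H a) a) /\
  (forall (i : sidx S) (H : sle i i) (a : sst i), svalid a -> approx (sproj H a) a) /\
  (forall (i i' i'' : sidx S) (H1 : sle i i') (H2 : sle i' i'') (H3 : sle i i'') (a : sst i),
      svalid a -> approx (semb H2 (semb H1 a)) (semb H3 a)) /\
  (forall (i i' i'' : sidx S) (H1 : sle i i') (H2 : sle i' i'') (H3 : sle i i'') (a : sst i''),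
      svalid a -> approx (sproj H1 (sproj H2 a)) (sproj H3 a)) /\
  (forall (i i' : sidx S) (H : sle i i') (a : sst i),
      svalid a -> approx (sproj H (semb H a)) a) /\
  (forall (i i' i'' : sidx S) (H1 : sle i i') (H2 : sle i' i'') (a' : sst i') (a : sst i),
      svalid a' -> svalid a -> srel a' a -> srel (semb H2 a') a) /\
  (forall (i i' i'' : sidx S) (H1 : sle i i') (H2 : sle i' i'') (a'' : sst i'') (a : sst i),
      svalid a'' -> svalid a -> srel a'' a -> srel (sproj H2 a'') a).

Definition is_direct_factor_system (S : RawSys) : Prop :=
  is_factor_system S /\
  forall (i i' : sidx S) (H : sle i i') (a' : sst i') (a : sst i), svalid a' -> svalid a ->
    (srel a' a <-> approx a' (semb H a)).

Definition propSys : RawSys :=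
  {| sidx := unit; sle := fun _ _ => True; sst := fun _ => bool;
     svalid := fun _ _ => True; srel := fun _ _ a' a => a' = a;
     semb := fun _ _ _ a => a; sproj := fun _ _ _ a => a |}.

Definition funSys (S T : RawSys) : RawSys :=
  {| sidx := (sidx S * sidx T)%type;
     sle := fun p p' => sle (fst p) (fst p') /\ sle (snd p) (snd p');
     sst := fun p => sst (fst p) -> sst (snd p);
     svalid := fun p f =>
       (forall a : sst (fst p), svalid a -> svalid (f a)) /\
       (forall a b : sst (fst p), svalid a -> svalid b ->
          approx a b -> approx (f a) (f b));
     srel := fun p p' f' f =>
       (sle (fst p) (fst p') /\ sle (snd p) (snd p')) /\
       (forall (a' : sst (fst p')) (a : sst (fst p)), svalid a' -> svalid a ->
          srel a' a -> srel (f' a') (f a));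
     semb := fun p p' H f => fun a => semb (proj2 H) (f (sproj (proj1 H) a));
     sproj := fun p p' H f' => fun a => sproj (proj2 H) (f' (semb (proj1 H) a)) |}.

Section Types.
Variable B : Type.
Variable BI : B -> BaseSys.

Inductive ty : Type :=
| TBase : B -> ty
| TProp : ty
| TArr : ty -> ty -> ty.

Fixpoint posT (t : ty) : bool :=
  match t with
  | TBase _ => true
  | TProp => true
  | TArr r s => negT r && posT s
  end
with negT (t : ty) : bool :=
  match t with
  | TBase _ => false
  | TProp => true
  | TArr r s => posT r && negT s
  end.

Fixpoint interp (t : ty) : RawSys :=
  match t with
  | TBase b => baseRaw (BI b)
  | TProp => propSys
  | TArr r s => funSys (interp r) (interp s)
  end.

Inductive term : Type :=
| Var : nat -> term
| App : term -> term -> term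
| Lam : nat -> ty -> term -> term.

Inductive typed : list ty -> term -> ty -> Prop :=
| typed_var : forall G k, k < length G -> typed G (Var k) (nth k G TProp)
| typed_app : forall G r s rho sigma,
    typed G r (TArr rho sigma) -> typed G s rho -> typed G (App r s) sigma
| typed_lam : forall G r rho sigma,
    typed (G ++ [rho]) r sigma -> typed G (Lam (length G) rho r) (TArr rho sigma).

(* An index context C = (i_0,...,i_{n-1}) together with the types rho_k:
   a list of pairs (rho_k, i_k) with i_k in I_{rho_k}. *)
Definition entry : Type := { t : ty & sidx (interp t) }.
Definition dentry : entry := existT _ TProp tt.

(* State judgements C |- r : i (in Type, so that values are computed along
   derivations). *)
Unset Implicit Arguments.
Inductive stj : list entry -> term -> forall t : ty, sidx (interp t) -> Type :=
| stj_var_pos : forall C k (j : sidx (interp (projT1 (nth k C dentry)))),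
    k < length C -> posT (projT1 (nth k C dentry)) = true ->
    sle (projT2 (nth k C dentry)) j ->
    stj C (Var k) (projT1 (nth k C dentry)) j
| stj_var_neg : forall C k (j : sidx (interp (projT1 (nth k C dentry)))),
    k < length C -> negT (projT1 (nth k C dentry)) = true ->
    sle j (projT2 (nth k C dentry)) ->
    stj C (Var k) (projT1 (nth k C dentry)) j
| stj_app : forall C r s rho sigma (i : sidx (interp rho)) (j : sidx (interp sigma)),
    stj C r (TArr rho sigma) (i, j) -> stj C s rho i -> stj C (App r s) sigma j
| stj_lam : forall C n rho sigma r (i : sidx (interp rho)) (j : sidx (interp sigma)),
    n = length C ->
    stj (C ++ [existT _ rho i]) r sigma j ->
    stj C (Lam n rho r) (TArr rho sigma) (i, j).
Set Implicit Arguments.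
Arguments stj_var_pos {C k j}.
Arguments stj_var_neg {C k j}.
Arguments stj_app {C r s rho sigma i j}.
Arguments stj_lam {C n rho sigma r i j}.

(* Tuples a in [[Gamma]]_C = prod_k [[rho_k]]_{i_k}. *)
Inductive hlist (F : entry -> Type) : list entry -> Type :=
| HNil : hlist F nil
| HCons : forall e l, F e -> hlist F l -> hlist F (e :: l).

Definition estate (e : entry) : Type := sst (projT2 e).

Fixpoint hsnoc (l : list entry) (h : hlist estate l) (e : entry) (x : estate e)
  : hlist estate (l ++ [e]) :=
  match h in hlist _ l0 return hlist estate (l0 ++ [e]) with
  | HNil _ => HCons x (HNil _)
  | HCons y h' => HCons y (hsnoc h' x)
  end.

Fixpoint hnth (l : list entry) (h : hlist estate l) (k : nat) {struct h}
  : estate (nth k l dentry) :=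
  match h in hlist _ l0 return estate (nth k l0 dentry) with
  | HNil _ => match k return estate (nth k nil dentry) with
              | 0 => true | S _ => true end
  | @HCons _ e l' y h' =>
      match k return estate (nth k (e :: l') dentry) with
      | 0 => y
      | S m => hnth h' m
      end
  end.

Fixpoint hvalid (l : list entry) (h : hlist estate l) : Prop :=
  match h with
  | HNil _ => True
  | HCons x h' => svalid x /\ hvalid h'
  end.

Fixpoint sval (C : list entry) (r : term) (t : ty) (i : sidx (interp t))
  (d : stj C r t i) (a : hlist estate C) {struct d} : sst i :=
  match d in stj C0 r0 t0 i0 return hlist estate C0 -> sst i0 with
  | stj_var_pos _ _ H => fun a => semb H (hnth a _)
  | stj_var_neg _ _ H => fun a => sproj H (hnth a _)
  | stj_app d1 d2 => fun a => (sval d1 a) (sval d2 a)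
  | @stj_lam C0 _ rho _ _ i0 _ _ d1 =>
      fun a => fun b : sst i0 => sval d1 (@hsnoc C0 a (existT _ rho i0) b)
  end a.

End Types.
Arguments stj {B BI} _ _ _ _.

(* By induction on the type rho define a relation
   x ~_rho y between states of [[rho]] at arbitrary, possibly incomparable,
   indices: ~ itself on base types, equality on prop, and "related arguments
   give related results" on function types.  Since every interpreted system
   is prefactor, ~_rho coincides with |> whenever the indices are comparable.
   Directness of the base systems makes ~_rho stable under embeddings for
   rho in Type^+ and under projections for rho in Type^-, which are exactly
   the operations the variable rules apply.  The fundamental lemma follows:
   two state derivations of the same term, evaluated in related environments,
   give related values.  Comparing the derivations at i and i' in one and the
   same environment yields the claimed instance of |>. *)

From Stdlib Require Import List Lia Program.Equality.

Set Implicit Arguments.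
Unset Strict Implicit.

Lemma approx_sym (S : RawSys) i j (a : sst (S:=S) i) (b : sst j) :
  approx a b -> approx b a.
Proof. intros (k & c & Vc & Lik & Ljk & Rca & Rcb). exists k, c; tauto. Qed.

(* The part of the factor-system axioms that survives the function-space
   construction; [approx_srel] is the prefactor condition at a single index. *)
Record coherent (S : RawSys) : Prop := {
  sle_refl : forall i : sidx S, sle i i;
  sle_trans : forall i j k : sidx S, sle i j -> sle j k -> sle i k;
  srel_sle : forall i i' (a' : sst (S:=S) i') (a : sst i), srel a' a -> sle i i';
  srel_refl : forall i (a : sst (S:=S) i), svalid a -> srel a a;
  approx_srel : forall i (a b : sst (S:=S) i),
    svalid a -> svalid b -> approx a b -> srel a b;
  semb_valid : forall i i' (H : sle (S:=S) i i') (a : sst i),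
    svalid a -> svalid (semb H a);
  sproj_valid : forall i i' (H : sle (S:=S) i i') (a : sst i'),
    svalid a -> svalid (sproj H a);
  semb_srel : forall i i' (H : sle (S:=S) i i') (a b : sst i),
    svalid a -> svalid b -> srel a b -> srel (semb H a) (semb H b);
  sproj_srel : forall i i' (H : sle (S:=S) i i') (a b : sst i'),
    svalid a -> svalid b -> srel a b -> srel (sproj H a) (sproj H b);
  srel_semb_l : forall i i' i'' (H : sle (S:=S) i' i'') (a' : sst i') (a : sst i),
    svalid a' -> svalid a -> srel a' a -> srel (semb H a') a;
  srel_sproj_l : forall i i' i'' (H : sle (S:=S) i' i'') (a'' : sst i'') (a : sst i),
    svalid a'' -> svalid a -> sle i i' -> srel a'' a -> srel (sproj H a'') a
}.

Local Hint Resolve sle_refl srel_refl semb_valid sproj_valid : core.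

Section CoherentSystem.
Variable S : RawSys.
Hypothesis GS : coherent S.

Lemma srel_approx i i' (a' : sst (S:=S) i') (a : sst i) :
  svalid a' -> srel a' a -> approx a' a.
Proof.
  intros Va' R. exists i', a'.
  repeat split; [exact Va' | apply (sle_refl GS) | exact (srel_sle GS R)
                | exact (srel_refl GS Va') | exact R].
Qed.

Lemma srel_sym i (a b : sst (S:=S) i) :
  svalid a -> svalid b -> srel a b -> srel b a.
Proof.
  intros Va Vb R. apply (approx_srel GS); auto.
  apply approx_sym, srel_approx; auto.
Qed.

Lemma srel_trans i (a b c : sst (S:=S) i) :
  svalid a -> svalid b -> svalid c -> srel a b -> srel b c -> srel a c.
Proof.
  intros Va Vb Vc Rab Rbc. apply (approx_srel GS); auto.
  exists i, b.
  repeat split; [exact Vb | apply (sle_refl GS) .. | apply srel_sym | exact Rbc]; auto.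
Qed.

Lemma semb_approx i i' (H : sle (S:=S) i i') (a b : sst i) :
  svalid a -> svalid b -> approx a b -> approx (semb H a) (semb H b).
Proof.
  intros Va Vb A. apply srel_approx; [auto|].
  apply (semb_srel GS); auto. apply (approx_srel GS); auto.
Qed.

Lemma sproj_approx i i' (H : sle (S:=S) i i') (a b : sst i') :
  svalid a -> svalid b -> approx a b -> approx (sproj H a) (sproj H b).
Proof.
  intros Va Vb A. apply srel_approx; [auto|].
  apply (sproj_srel GS); auto. apply (approx_srel GS); auto.
Qed.

End CoherentSystem.

Lemma factor_system_coherent (S : RawSys) : is_factor_system S -> coherent S.
Proof.
  intros [[[[_ [Hrefl [Htrans _]]] [Hle Hrefl_rel]] Hpre]
          [Vemb [Vproj [Aemb [Aproj [_ [_ [_ [_ [_ [Lemb Lproj]]]]]]]]]]].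
  assert (Hsame : forall i (a b : sst (S:=S) i),
            svalid a -> svalid b -> approx a b <-> srel a b)
    by (intros; apply Hpre; auto).
  constructor; auto.
  - intros; apply Hsame; auto.
  - intros i i' H a b Va Vb R. apply Hsame; auto. apply Aemb, Hsame; auto.
  - intros i i' H a b Va Vb R. apply Hsame; auto. apply Aproj, Hsame; auto.
  - intros i i' i'' H a' a Va' Va R. eapply Lemb; eauto.
Qed.

Lemma coherent_prop : coherent propSys.
Proof.
  constructor; simpl; auto.
  intros i a b _ _ (k & c & _ & _ & _ & Rca & Rcb). simpl in *. congruence.
Qed.

Section FunctionSpace.
Variables S T : RawSys.
Hypotheses (GS : coherent S) (GT : coherent T).

Lemma fun_srel_refl p (f : sst (S:=funSys S T) p) : svalid f -> srel f f.
Proof.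
  destruct p as [i j]; intros [Vf Af]; simpl in *.
  split; [split; auto|].
  intros a' a Va' Va R. apply (approx_srel GT); auto.
  apply Af; auto. apply (srel_approx GS); auto.
Qed.

Lemma fun_approx_srel p (f g : sst (S:=funSys S T) p) :
  svalid f -> svalid g -> approx f g -> srel f g.
Proof.
  destruct p as [i j]; intros [Vf Af] [Vg Ag].
  intros ([k l] & c & [Vc Ac] & [Hik Hjl] & _ & [_ Rcf] & [_ Rcg]); simpl in *.
  split; [split; auto|].
  intros b' b Vb' Vb R. apply (approx_srel GT); auto.
  exists l, (c (semb Hik b')).
  repeat split; auto.
  - apply Rcf; auto. apply (srel_semb_l GS); auto.
  - apply Rcg; auto. apply (srel_semb_l GS); auto.
Qed.

Lemma fun_semb_valid p p' (H : sle (S:=funSys S T) p p') (f : sst p) :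
  svalid f -> svalid (semb H f).
Proof.
  destruct p as [i j], p' as [i' j'], H as [Hi Hj]; intros [Vf Af]; simpl in *.
  split; intros; auto.
  apply (semb_approx GT); auto. apply Af; auto. apply (sproj_approx GS); auto.
Qed.

Lemma fun_sproj_valid p p' (H : sle (S:=funSys S T) p p') (f : sst p') :
  svalid f -> svalid (sproj H f).
Proof.
  destruct p as [i j], p' as [i' j'], H as [Hi Hj]; intros [Vf Af]; simpl in *.
  split; intros; auto.
  apply (sproj_approx GT); auto. apply Af; auto. apply (semb_approx GS); auto.
Qed.

Lemma fun_semb_srel p p' (H : sle (S:=funSys S T) p p') (f g : sst p) :
  svalid f -> svalid g -> srel f g -> srel (semb H f) (semb H g).
Proof.
  destruct p as [i j], p' as [i' j'], H as [Hi Hj].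
  intros [Vf _] [Vg _] [_ R]; simpl in *.
  split; [split; auto|].
  intros x' x Vx' Vx Rx. apply (semb_srel GT); auto.
  apply R; auto. apply (sproj_srel GS); auto.
Qed.

Lemma fun_sproj_srel p p' (H : sle (S:=funSys S T) p p') (f g : sst p') :
  svalid f -> svalid g -> srel f g -> srel (sproj H f) (sproj H g).
Proof.
  destruct p as [i j], p' as [i' j'], H as [Hi Hj].
  intros [Vf _] [Vg _] [_ R]; simpl in *.
  split; [split; auto|].
  intros x' x Vx' Vx Rx. apply (sproj_srel GT); auto.
  apply R; auto. apply (semb_srel GS); auto.
Qed.

Lemma fun_srel_semb_l p p' p'' (H : sle (S:=funSys S T) p' p'')
    (f' : sst p') (f : sst p) :
  svalid f' -> svalid f -> srel f' f -> srel (semb H f') f.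
Proof.
  destruct p as [i j], p' as [i' j'], p'' as [i'' j''], H as [Hi Hj].
  intros [Vf' _] [Vf _] [[Lii' Ljj'] R]; simpl in *.
  split; [split; eapply (sle_trans GS) || eapply (sle_trans GT); eauto|].
  intros x b Vx Vb Rxb. apply (srel_semb_l GT); auto.
  apply R; auto. apply (srel_sproj_l GS); auto.
Qed.

Lemma fun_srel_sproj_l p p' p'' (H : sle (S:=funSys S T) p' p'')
    (f'' : sst p'') (f : sst p) :
  svalid f'' -> svalid f -> sle p p' -> srel f'' f -> srel (sproj H f'') f.
Proof.
  destruct p as [i j], p' as [i' j'], p'' as [i'' j''], H as [Hi Hj].
  intros [Vf'' _] [Vf _] [Lii' Ljj'] [_ R]; simpl in *.
  split; [split; auto|].
  intros x b Vx Vb Rxb. apply (srel_sproj_l GT); auto.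
  apply R; auto. apply (srel_semb_l GS); auto.
Qed.

Lemma coherent_funSys : coherent (funSys S T).
Proof.
  constructor.
  - intros [i j]; split; simpl; auto.
  - intros [i1 j1] [i2 j2] [i3 j3] [] []; split; simpl in *;
      eapply (sle_trans GS) || eapply (sle_trans GT); eauto.
  - intros p p' f' f [H _]; exact H.
  - exact fun_srel_refl.
  - exact fun_approx_srel.
  - exact fun_semb_valid.
  - exact fun_sproj_valid.
  - exact fun_semb_srel.
  - exact fun_sproj_srel.
  - exact fun_srel_semb_l.
  - exact fun_srel_sproj_l.
Qed.

End FunctionSpace.

Lemma direct_approx_semb_l (S : RawSys) : is_direct_factor_system S ->
  forall i i' (H : sle i i') l (x : sst (S:=S) i) (y : sst l),
  svalid x -> svalid y -> approx x y -> approx (semb H x) y.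
Proof.
  intros [HF Hdirect]. pose proof (factor_system_coherent HF) as GS.
  destruct HF as [[[[_ [_ [_ Hdir]]] _] _] [_ [_ [_ [_ [_ [_ [Hcomp [_ [_ [Lemb _]]]]]]]]]]].
  intros i i' H l x y Vx Vy (k & c & Vc & Hik & Hlk & Rcx & Rcy).
  destruct (Hdir k i') as (m & Hkm & Hi'm).
  pose proof (sle_trans GS H Hi'm) as Him.
  assert (Vc' : svalid (semb Hkm c)) by auto.
  assert (Rc'x : srel (semb Hkm c) x) by (eapply Lemb; eauto).
  assert (Rc'y : srel (semb Hkm c) y) by (eapply Lemb; eauto).
  exists m, (semb Hkm c). repeat split; auto.
  - eapply (sle_trans GS); eauto.
  - (* with c' = emb c, directness turns c' |> x into c' ~ emb_{i,m} x,
       and emb_{i,m} x ~ emb_{i',m} (emb_{i,i'} x) *)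
    apply (Hdirect _ _ Hi'm); auto. apply (srel_approx GS); auto.
    apply (srel_trans GS) with (semb Him x); auto.
    + apply (approx_srel GS); auto. apply (Hdirect _ _ Him); auto.
    + apply (approx_srel GS); auto. apply approx_sym, Hcomp; auto.
Qed.

Section LogicalRelation.
Variable B : Type.
Variable BI : B -> BaseSys.
Hypothesis HBI : forall b : B, is_direct_factor_system (baseRaw (BI b)).

Lemma coherent_interp t : coherent (interp BI t).
Proof.
  induction t; simpl.
  - exact (factor_system_coherent (proj1 (HBI b))).
  - exact coherent_prop.
  - apply coherent_funSys; auto.
Qed.

Local Hint Resolve coherent_interp : core.

Fixpoint sim (t : ty B) : forall i i' : sidx (interp BI t), sst i -> sst i' -> Prop :=
  match t with
  | TBase b => fun _ _ x y => approx (S:=interp BI (TBase b)) x y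
  | TProp _ => fun _ _ x y => x = y
  | TArr r s => fun _ _ f g =>
      forall u v, svalid u -> svalid v -> @sim r _ _ u v -> @sim s _ _ (f u) (g v)
  end.
Arguments sim t {i i'} _ _.

Definition related t (i i' : sidx (interp BI t)) (x : sst i) (y : sst i') : Prop :=
  svalid x /\ svalid y /\ sim t x y.
Arguments related t {i i'} _ _.

Lemma sim_sym t : forall i i' (x : sst (S:=interp BI t) i) (y : sst i'),
  sim t x y -> sim t y x.
Proof.
  induction t; simpl; intros i i' x y Hxy.
  - apply approx_sym; exact Hxy.
  - symmetry; exact Hxy.
  - intros u v Vu Vv Huv. apply IHt2, Hxy, IHt1; auto.
Qed.

Lemma related_sym t i i' (x : sst (S:=interp BI t) i) (y : sst i') :
  related t x y -> related t y x.
Proof. intros (Vx & Vy & Hxy). repeat split; auto. apply sim_sym; exact Hxy. Qed.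

Lemma sim_srel t : forall i i' (x' : sst (S:=interp BI t) i') (x : sst i),
  sle i i' -> svalid x' -> svalid x -> (sim t x' x <-> srel x' x).
Proof.
  induction t as [b| |t1 IH1 t2 IH2]; simpl.
  - intros i i' x' x Hii' Vx' Vx. destruct (HBI b) as [[[_ Hpre] _] _]. apply Hpre; auto.
  - tauto.
  - intros [i j] [i' j'] f' f [Hii' Hjj'] [Vf' _] [Vf _]; simpl in *. split.
    + intros Hf. split; [split; auto|].
      intros b' b Vb' Vb R. apply IH2; auto. apply Hf; auto. apply IH1; auto.
    + intros [_ R] u v Vu Vv Huv. apply IH2; auto.
      apply R; auto. apply IH1; auto.
Qed.

Lemma related_refl t i (x : sst (S:=interp BI t) i) : svalid x -> related t x x.
Proof.
  intros Vx. repeat split; auto. apply sim_srel; auto.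
Qed.

Lemma sim_semb_sproj t :
  (posT t = true -> forall i i' (H : sle i i') l (x : sst (S:=interp BI t) i) (y : sst l),
     svalid x -> svalid y -> sim t x y -> sim t (semb H x) y) /\
  (negT t = true -> forall i i' (H : sle i i') l (x : sst (S:=interp BI t) i') (y : sst l),
     svalid x -> svalid y -> sim t x y -> sim t (sproj H x) y).
Proof.
  induction t as [b| |t1 [E1 P1] t2 [E2 P2]]; simpl.
  - split; [|discriminate]. exact (fun _ => direct_approx_semb_l (HBI b)).
  - split; auto.
  - split; intros Hpn; apply andb_prop in Hpn as [Hpn1 Hpn2].
    + intros [i k] [i' k'] [H1 H2] [l m] f g [Vf _] [Vg _] Hfg u v Vu Vv Huv; simpl in *.
      apply E2; [auto .. | apply Hfg; [auto .. | apply P1; auto]].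
    + intros [i k] [i' k'] [H1 H2] [l m] f g [Vf _] [Vg _] Hfg u v Vu Vv Huv; simpl in *.
      apply P2; [auto .. | apply Hfg; [auto .. | apply E1; auto]].
Qed.

Lemma related_semb_l t i i' (H : sle i i') l (x : sst (S:=interp BI t) i) (y : sst l) :
  posT t = true -> related t x y -> related t (semb H x) y.
Proof.
  intros Hp (Vx & Vy & Hxy). repeat split; auto. apply (proj1 (sim_semb_sproj t)); auto.
Qed.

Lemma related_sproj_l t i i' (H : sle i i') l (x : sst (S:=interp BI t) i') (y : sst l) :
  negT t = true -> related t x y -> related t (sproj H x) y.
Proof.
  intros Hn (Vx & Vy & Hxy). repeat split; auto. apply (proj2 (sim_semb_sproj t)); auto.
Qed.

Inductive related_env : forall C C' : list (entry BI),
    hlist (@estate B BI) C -> hlist (@estate B BI) C' -> Prop :=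
| related_env_nil : related_env (HNil _) (HNil _)
| related_env_cons : forall t (i i' : sidx (interp BI t)) C C' (x : sst i) (x' : sst i')
    (h : hlist (@estate B BI) C) (h' : hlist (@estate B BI) C'),
    related t x x' -> related_env h h' ->
    related_env (HCons (e:=existT _ t i) x h) (HCons (e:=existT _ t i') x' h').

Lemma related_env_types C C' (a : hlist (@estate B BI) C) (a' : hlist (@estate B BI) C') :
  related_env a a' -> map (@projT1 _ _) C = map (@projT1 _ _) C'.
Proof. induction 1; simpl; congruence. Qed.

Lemma related_env_hvalid C C' (a : hlist (@estate B BI) C) (a' : hlist (@estate B BI) C') :
  related_env a a' -> hvalid a /\ hvalid a'.
Proof.
  induction 1 as [|t i i' C C' x x' h h' (Vx & Vx' & _) _ [Vh Vh']]; simpl; tauto.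
Qed.

Lemma related_env_refl C (a : hlist (@estate B BI) C) : hvalid a -> related_env a a.
Proof.
  induction a as [|[t i] C x h IH]; simpl.
  - constructor.
  - intros [Vx Vh]. constructor; auto. apply related_refl; exact Vx.
Qed.

Lemma related_env_snoc C C' (a : hlist (@estate B BI) C) (a' : hlist (@estate B BI) C')
    t (i i' : sidx (interp BI t)) (x : sst i) (x' : sst i') :
  related_env a a' -> related t x x' ->
  related_env (hsnoc a (e:=existT _ t i) x) (hsnoc a' (e:=existT _ t i') x').
Proof. induction 1; intros Hx; simpl; constructor; auto; constructor. Qed.

Lemma stj_var_tail e (C : list (entry BI)) k t (j : sidx (interp BI t))
    (d : stj (e :: C) (Var B (S k)) t j) :
  { d0 : stj C (Var B k) t j | forall x h, sval d (HCons x h) = sval d0 h }.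
Proof.
  dependent destruction d.
  - unshelve eexists (@stj_var_pos B BI C k j _ _ _); simpl in *; auto; lia.
  - unshelve eexists (@stj_var_neg B BI C k j _ _ _); simpl in *; auto; lia.
Qed.

Lemma related_var C C' (a : hlist (@estate B BI) C) (a' : hlist (@estate B BI) C') :
  related_env a a' -> forall k t j j' (d : stj C (Var B k) t j) (d' : stj C' (Var B k) t j'),
  related t (sval d a) (sval d' a').
Proof.
  induction 1 as [|t0 i i' C C' x x' h h' Hxx' Hhh' IH]; intros k t j j' d d'.
  - dependent destruction d; simpl in *; lia.
  - destruct k as [|k].
    + dependent destruction d; dependent destruction d'; simpl in *.
      all: first [apply related_semb_l | apply related_sproj_l]; auto.
      all: apply related_sym; first [apply related_semb_l | apply related_sproj_l]; auto.
      all: apply related_sym; exact Hxx'.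
    + destruct (stj_var_tail d) as [d0 E], (stj_var_tail d') as [d0' E'].
      rewrite E, E'. apply IH.
Qed.

Lemma nth_entry_type (C C' : list (entry BI)) k :
  map (@projT1 _ _) C = map (@projT1 _ _) C' ->
  projT1 (nth k C (dentry BI)) = projT1 (nth k C' (dentry BI)).
Proof.
  intros HC. rewrite <- (map_nth (@projT1 _ _) C), HC, map_nth. reflexivity.
Qed.

Lemma stj_type_unique (C : list (entry BI)) r t j (d : stj C r t j) :
  forall (C' : list (entry BI)) t' j' (d' : stj C' r t' j'),
  map (@projT1 _ _) C = map (@projT1 _ _) C' -> t = t'.
Proof.
  induction d; intros C' t' j' d' HC; dependent destruction d'.
  1-4: apply nth_entry_type; exact HC.
  - specialize (IHd1 _ _ _ d'1 HC). congruence.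
  - f_equal. apply (IHd _ _ _ d'). rewrite !map_app. simpl. f_equal. exact HC.
Qed.

Lemma svalid_fun_of_related rho sigma i j
    (F : sst (S:=interp BI rho) i -> sst (S:=interp BI sigma) j) :
  (forall u v, related rho u v -> related sigma (F u) (F v)) ->
  svalid (S:=interp BI (TArr rho sigma)) (i:=(i, j)) F.
Proof.
  intros HF. split.
  - intros u Vu. apply (HF u u (related_refl Vu)).
  - intros u v Vu Vv Auv.
    assert (Huv : related rho u v).
    { repeat split; auto. apply sim_srel; auto. apply (approx_srel (coherent_interp rho)); auto. }
    destruct (HF u v Huv) as (VFu & VFv & HFuv).
    apply (srel_approx (coherent_interp sigma)); auto. apply sim_srel; auto.
Qed.

Lemma related_sval r :
  forall (C C' : list (entry BI)) t j j' (d : stj C r t j) (d' : stj C' r t j')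
    (a : hlist (@estate B BI) C) (a' : hlist (@estate B BI) C'),
  related_env a a' -> related t (sval d a) (sval d' a').
Proof.
  induction r as [k | r1 IH1 r2 IH2 | n rho r IH]; intros C C' t j j' d d' a a' Ha.
  - apply related_var; exact Ha.
  - dependent destruction d; dependent destruction d'.
    assert (rho = rho0) as <-.
    { injection (stj_type_unique d1 d'1 (related_env_types Ha)); auto. }
    destruct (IH1 _ _ _ _ _ d1 d'1 a a' Ha) as ([Vf _] & [Vf' _] & Hff').
    destruct (IH2 _ _ _ _ _ d2 d'2 a a' Ha) as (Vx & Vx' & Hxx').
    simpl. repeat split; auto.
  - dependent destruction d; dependent destruction d'. simpl.
    destruct (related_env_hvalid Ha) as [Va Va'].
    split; [|split].
    1,2: apply svalid_fun_of_related; intros u v Huv;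
         apply IH, related_env_snoc; auto using related_env_refl.
    intros u v Vu Vv Huv. apply IH, related_env_snoc; auto. repeat split; auto.
Qed.

End LogicalRelation.

Theorem corollary3p10
  (B : Type) (BI : B -> BaseSys)
  (HBI : forall b : B, is_direct_factor_system (baseRaw (BI b)))
  (Gamma : list (ty B)) (r : term B) (rho : ty B)
  (Hpm : forall t, In t Gamma -> posT t = true \/ negT t = true)
  (Hty : typed Gamma r rho)
  (C : list (entry BI)) (HC : map (@projT1 _ _) C = Gamma)
  (i i' : sidx (interp BI rho)) (Hii' : sle i i')
  (d : stj C r rho i) (d' : stj C r rho i')
  (a : hlist (@estate B BI) C) (Ha : hvalid a) :
  srel (sval d' a) (sval d a).
Proof.
  destruct (related_sval HBI d' d (related_env_refl HBI Ha)) as (Vd' & Vd & Hsim).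
  apply (sim_srel HBI); assumption.
Qed.
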